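(* Let $1<\alpha<2$. If $\xi\in E_\alpha\setminus K_3$, then $\partial_y^3w(\xi)\neq0$. Moreover, $\partial_y^3w(P)=0$ for all $P\in K_3$.
   Context: $\mathbb{T}^2=[-\pi,\pi]^2$, $M=\mathbb{T}^2\setminus\{0\}$, $w(\xi)=\left(\sin^2(\frac{\xi_1}{2})+\sin^2(\frac{\xi_2}{2})\right)^{\frac{\alpha}{2}}$ (real analytic on $M$). $K_3=\{(\pm\frac\pi2,\pm\frac\pi2)\}$. $E_\alpha=\{\xi\in M:\det D^2w(\xi)=0\}$; at such points $D^2w(\xi)$ has rank one. For $\xi\in E_\alpha$, let $k_2(\xi)$ be a unit vector spanning the kernel of $D^2w(\xi)$ and $\partial_y=k_2(\xi)\cdot\nabla$ denote the directional derivative in that direction (so $\partial_y^3w(\xi)=\sum_{i,j,l}k_{2,i}k_{2,j}k_{2,l}\partial_{ijl}w(\xi)$). *)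

From Stdlib Require Import Reals.
From Coquelicot Require Import Coquelicot.
Open Scope R_scope.

Definition coord (i : bool) (v : R * R) : R := if i then snd v else fst v.

(* w(xi) = (sin^2(xi_1/2) + sin^2(xi_2/2))^(alpha/2), as a function on R^2.
   (Rpower is only used at positive arguments near points of M.) *)
Definition w (alpha : R) (xi : R * R) : R :=
  Rpower (sin (fst xi / 2) ^ 2 + sin (snd xi / 2) ^ 2) (alpha / 2).

Definition dpart (i : bool) (f : R * R -> R) : R * R -> R :=
  fun xi => if i then Derive (fun t => f (fst xi, t)) (snd xi)
            else Derive (fun t => f (t, snd xi)) (fst xi).

Definition hess (f : R * R -> R) (xi : R * R) (i j : bool) : R :=
  dpart i (dpart j f) xi.

Definition hess_det (f : R * R -> R) (xi : R * R) : R :=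
  hess f xi false false * hess f xi true true
  - hess f xi false true * hess f xi true false.

Definition sumb (g : bool -> R) : R := g false + g true.

Definition in_hess_kernel (f : R * R -> R) (xi : R * R) (k : R * R) : Prop :=
  forall i : bool, sumb (fun j => hess f xi i j * coord j k) = 0.

Definition unit_vec (k : R * R) : Prop := fst k ^ 2 + snd k ^ 2 = 1.

Definition dir3 (f : R * R -> R) (xi : R * R) (k : R * R) : R :=
  sumb (fun i => sumb (fun j => sumb (fun l =>
    coord i k * coord j k * coord l k * dpart i (dpart j (dpart l f)) xi))).

Definition in_M (xi : R * R) : Prop :=
  -PI <= fst xi <= PI /\ -PI <= snd xi <= PI /\ xi <> (0, 0).

Definition in_E (alpha : R) (xi : R * R) : Prop :=
  in_M xi /\ hess_det (w alpha) xi = 0.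

Definition in_K3 (xi : R * R) : Prop :=
  (fst xi = PI / 2 \/ fst xi = - (PI / 2)) /\
  (snd xi = PI / 2 \/ snd xi = - (PI / 2)).

From Stdlib Require Import Reals Lra Psatz.
From Coquelicot Require Import Coquelicot.
Open Scope R_scope.

(* Write [w = u ^ p] with [p = alpha / 2] and [u = 1 - (cos xi_1 + cos xi_2) / 2]
   [= sin^2 (xi_1 / 2) + sin^2 (xi_2 / 2)].  Up to positive factors [p w / u ^ n], the
   derivatives of [w] are polynomials in [c_i = cos xi_i], [s_i = sin xi_i] and
   [b = 1 - p], and a kernel vector [k] of [D^2 w] satisfies [u c_i k_i = b s_i t], where
   [t] is the derivative of [u] along [k].  Off [K_3] (where [c_1 = c_2 = 0]) this forces
   [t <> 0] and [c_1 c_2 <> 0], hence [k_i = b t s_i / (u c_i)] together with the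
   compatibility relation [2 u c_1 c_2 = b (c_1 + c_2) (1 - c_1 c_2)].  Eliminating [k]
   and [b], [d_k^3 w] becomes a nonzero multiple of [cubic_sign_poly c_1 c_2], which
   does not vanish by a case analysis on the signs of [c_1], [c_2].  On [K_3] the kernel
   equations force [t = 0] and [k_1^2 = k_2^2], which kills [d_k^3 w]. *)

Definition cubic_sign_poly (c1 c2 : R) : R :=
  (2 - c1 - c2) * ((1 - c1 ^ 4) * c2 ^ 3 + (1 - c2 ^ 4) * c1 ^ 3)
  - c1 * c2 * ((c1 + c2) * (1 - c1 * c2)) ^ 2.

Lemma cubic_sign_poly_pos (c1 c2 : R) :
  0 < c1 <= 1 -> 0 < c2 <= 1 -> c1 + c2 < 2 -> 0 < cubic_sign_poly c1 c2.
Proof.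
intros H1 H2 Hlt.
replace (cubic_sign_poly c1 c2) with
  (c1 * c2 * ((1 - c1) * (1 - c2)) * (c1 - c2) ^ 2
   + (2 - c1 - c2) * ((1 - c1) ^ 2 * (1 + c1) * c2 ^ 3 + (1 - c2) ^ 2 * (1 + c2) * c1 ^ 3))
  by (unfold cubic_sign_poly; ring).
assert (0 < c1 ^ 3) by (apply pow_lt; lra).
assert (0 < c2 ^ 3) by (apply pow_lt; lra).
assert (0 <= c1 * c2 * ((1 - c1) * (1 - c2)) * (c1 - c2) ^ 2).
{ apply Rmult_le_pos; [|apply pow2_ge_0]. apply Rmult_le_pos; nra. }
assert (0 <= (1 - c1) ^ 2 * (1 + c1) * c2 ^ 3)
  by (apply Rmult_le_pos; [apply Rmult_le_pos; [apply pow2_ge_0|]|]; lra).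
assert (0 <= (1 - c2) ^ 2 * (1 + c2) * c1 ^ 3)
  by (apply Rmult_le_pos; [apply Rmult_le_pos; [apply pow2_ge_0|]|]; lra).
assert (0 < (1 - c1) ^ 2 * (1 + c1) * c2 ^ 3 \/ 0 < (1 - c2) ^ 2 * (1 + c2) * c1 ^ 3).
{ destruct (Rlt_or_le c1 1); [left | right];
    (apply Rmult_lt_0_compat; [apply Rmult_lt_0_compat; [apply pow_lt|] |]); lra. }
nra.
Qed.

Lemma cubic_sign_poly_neg (c1 c2 : R) :
  -1 <= c1 < 0 -> 0 < c2 -> c1 + c2 < 0 -> cubic_sign_poly c1 c2 < 0.
Proof.
intros H1 H2 Hlt. set (x := - c1).
replace (cubic_sign_poly c1 c2) with
  ((c2 - x) * ((2 + x - c2) * (x ^ 2 + x * c2 + c2 ^ 2 + x ^ 3 * c2 ^ 3)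
               - x * c2 * (x - c2) * (1 + x * c2) ^ 2))
  by (unfold cubic_sign_poly, x; ring).
assert (0 < x * c2 <= 1) by (unfold x; nra).
assert (x ^ 2 + x * c2 + c2 ^ 2 + x ^ 3 * c2 ^ 3 >= x * c2 * (1 + x * c2) ^ 2)
  by (unfold x in *; nra).
assert (0 < x * c2 * (1 + x * c2) ^ 2) by (apply Rmult_lt_0_compat; [|apply pow_lt]; lra).
assert (0 < (2 + x - c2) * (x ^ 2 + x * c2 + c2 ^ 2 + x ^ 3 * c2 ^ 3)
            - x * c2 * (x - c2) * (1 + x * c2) ^ 2) by (unfold x in *; nra).
unfold x in *; nra.
Qed.

Lemma cubic_sign_poly_sym (c1 c2 : R) : cubic_sign_poly c1 c2 = cubic_sign_poly c2 c1.
Proof. unfold cubic_sign_poly; ring. Qed.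

Lemma cubic_sign_poly_neq0 (c1 c2 : R) : -1 <= c1 <= 1 -> -1 <= c2 <= 1 -> c1 + c2 < 2 ->
  0 < c1 * c2 * ((c1 + c2) * (1 - c1 * c2)) -> cubic_sign_poly c1 c2 <> 0.
Proof.
intros H1 H2 Hlt Hpos.
assert (Hc : 0 <= 1 - c1 * c2) by nra.
assert (Hc1 : c1 <> 0) by (intro e; rewrite e in Hpos; lra).
assert (Hc2 : c2 <> 0) by (intro e; rewrite e in Hpos; lra).
assert (Hsum : c1 * c2 < 0 -> c1 + c2 < 0).
{ intro Hneg. assert ((c1 + c2) * (1 - c1 * c2) < 0) by nra. nra. }
destruct (Rdichotomy _ _ Hc1), (Rdichotomy _ _ Hc2).
- assert (0 < c1 * c2) by nra.
  assert (0 < (c1 + c2) * (1 - c1 * c2)) by nra. nra.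
- assert (c1 + c2 < 0) by (apply Hsum; nra).
  apply Rlt_not_eq, cubic_sign_poly_neg; lra.
- assert (c1 + c2 < 0) by (apply Hsum; nra).
  rewrite cubic_sign_poly_sym. apply Rlt_not_eq, cubic_sign_poly_neg; lra.
- apply Rgt_not_eq, cubic_sign_poly_pos; lra.
Qed.

Section KernelCubic.

(* [c_i], [s_i] stand for [cos xi_i], [sin xi_i]; [u] for [1 - (cos xi_1 + cos xi_2) / 2]
   (so [w = u ^ (alpha / 2)]), [t] for the derivative of [u] along [k], and [b] for
   [1 - alpha / 2].  [Hker1], [Hker2] are the two rows of [D^2 w(xi) k = 0] divided by a
   positive factor, and [kernel_cubic] is [d_k^3 w(xi)] divided by [alpha w / (2 u^3)]. *)

Variables b u t c1 c2 s1 s2 k1 k2 : R.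
Hypotheses (Hsc1 : s1 ^ 2 + c1 ^ 2 = 1) (Hsc2 : s2 ^ 2 + c2 ^ 2 = 1)
  (Hk : k1 ^ 2 + k2 ^ 2 = 1) (Ht : t = (s1 * k1 + s2 * k2) / 2)
  (Hker1 : u * c1 * k1 = b * s1 * t) (Hker2 : u * c2 * k2 = b * s2 * t)
  (Hu : u = 1 - (c1 + c2) / 2).

Definition kernel_cubic : R :=
  b * (1 + b) * t ^ 3 - 3 * b * u * t * (c1 * k1 ^ 2 + c2 * k2 ^ 2) / 2
  - u ^ 2 * (s1 * k1 ^ 3 + s2 * k2 ^ 3) / 2.

Lemma kernel_cubic_reduced :
  kernel_cubic = b * (1 - 2 * b) * t ^ 3 - u ^ 2 * (s1 * k1 ^ 3 + s2 * k2 ^ 3) / 2.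
Proof.
assert (Hq : u * (c1 * k1 ^ 2 + c2 * k2 ^ 2) = 2 * b * t ^ 2).
{ transitivity ((u * c1 * k1) * k1 + (u * c2 * k2) * k2); [ring|].
  rewrite Hker1, Hker2, Ht. field. }
unfold kernel_cubic.
transitivity (b * (1 + b) * t ^ 3 - 3 * b * t * (u * (c1 * k1 ^ 2 + c2 * k2 ^ 2)) / 2
  - u ^ 2 * (s1 * k1 ^ 3 + s2 * k2 ^ 3) / 2); [field|].
rewrite Hq. field.
Qed.

Lemma kernel_slope_neq0 : u <> 0 -> ~ (c1 = 0 /\ c2 = 0) -> t <> 0.
Proof.
(* With [t = 0], [c_i k_i = 0] gives [(s_i k_i)^2 = k_i^2]; as [s_1 k_1 = - s_2 k_2],
   [k_1^2 = k_2^2 = 1/2], so both [c_i] vanish. *)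
intros Hu0 Hc Ht0. apply Hc.
assert (Hck1 : c1 * k1 = 0).
{ apply (Rmult_eq_reg_l u); [|exact Hu0].
  rewrite Rmult_0_r, <- Rmult_assoc, Hker1, Ht0. ring. }
assert (Hck2 : c2 * k2 = 0).
{ apply (Rmult_eq_reg_l u); [|exact Hu0].
  rewrite Rmult_0_r, <- Rmult_assoc, Hker2, Ht0. ring. }
assert (Hsk1 : (s1 * k1) ^ 2 = k1 ^ 2).
{ transitivity ((s1 ^ 2 + c1 ^ 2) * k1 ^ 2 - (c1 * k1) ^ 2); [ring|].
  rewrite Hsc1, Hck1. ring. }
assert (Hsk2 : (s2 * k2) ^ 2 = k2 ^ 2).
{ transitivity ((s2 ^ 2 + c2 ^ 2) * k2 ^ 2 - (c2 * k2) ^ 2); [ring|].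
  rewrite Hsc2, Hck2. ring. }
assert (Hk12 : k1 ^ 2 = k2 ^ 2).
{ rewrite <- Hsk1, <- Hsk2. replace (s1 * k1) with (- (s2 * k2)) by lra. ring. }
split; nra.
Qed.

Lemma kernel_cos_neq0 : b <> 0 -> t <> 0 -> c1 <> 0 /\ c2 <> 0.
Proof.
intros Hb Ht0. assert (Hbt : b * t <> 0) by now apply Rmult_integral_contrapositive_currified.
split; intro Hc0.
- assert (Hs : s1 = 0).
  { apply (Rmult_eq_reg_l (b * t)); [|exact Hbt].
    transitivity (u * c1 * k1); [rewrite Hker1|rewrite Hc0]; ring. }
  rewrite Hs, Hc0 in Hsc1. lra.
- assert (Hs : s2 = 0).
  { apply (Rmult_eq_reg_l (b * t)); [|exact Hbt].
    transitivity (u * c2 * k2); [rewrite Hker2|rewrite Hc0]; ring. }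
  rewrite Hs, Hc0 in Hsc2. lra.
Qed.

Lemma kernel_compatibility : t <> 0 -> 2 * u * c1 * c2 = b * ((c1 + c2) * (1 - c1 * c2)).
Proof.
intros Ht0. apply (Rmult_eq_reg_l t); [|exact Ht0].
transitivity (c2 * s1 * (u * c1 * k1) + c1 * s2 * (u * c2 * k2)); [rewrite Ht; field|].
rewrite Hker1, Hker2. transitivity (b * t * (s1 ^ 2 * c2 + s2 ^ 2 * c1)); [ring|].
replace (s1 ^ 2) with (1 - c1 ^ 2) by lra. replace (s2 ^ 2) with (1 - c2 ^ 2) by lra. ring.
Qed.

Lemma kernel_cubic_closed_form : b <> 0 -> u <> 0 -> t <> 0 ->
  kernel_cubic
  = - b * t ^ 3 * cubic_sign_poly c1 c2 / (c1 * c2 * ((c1 + c2) * (1 - c1 * c2)) ^ 2).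
Proof.
intros Hb Hu0 Ht0.
destruct (kernel_cos_neq0 Hb Ht0) as [Hc1 Hc2].
assert (HN : (c1 + c2) * (1 - c1 * c2) <> 0).
{ intro HN. generalize (kernel_compatibility Ht0). rewrite HN, Rmult_0_r.
  repeat apply Rmult_integral_contrapositive_currified; auto; discrR. }
destruct (Rmult_neq_0_reg _ _ HN) as [HN1 HN2].
assert (Hk1 : k1 = b * s1 * t / (u * c1)) by (rewrite <- Hker1; field; auto).
assert (Hk2 : k2 = b * s2 * t / (u * c2)) by (rewrite <- Hker2; field; auto).
assert (Hb' : b = 2 * u * c1 * c2 / ((c1 + c2) * (1 - c1 * c2)))
  by (rewrite (kernel_compatibility Ht0); field; auto).
rewrite kernel_cubic_reduced.
replace (s1 * k1 ^ 3) with ((s1 ^ 2) ^ 2 * (b * t) ^ 3 / (u * c1) ^ 3)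
  by (rewrite Hk1; field; auto).
replace (s2 * k2 ^ 3) with ((s2 ^ 2) ^ 2 * (b * t) ^ 3 / (u * c2) ^ 3)
  by (rewrite Hk2; field; auto).
replace (s1 ^ 2) with (1 - c1 ^ 2) by lra. replace (s2 ^ 2) with (1 - c2 ^ 2) by lra.
rewrite Hb', Hu. unfold cubic_sign_poly. field. repeat split; auto. lra.
Qed.

Lemma kernel_cubic_neq0 : 0 < b -> 0 < u -> ~ (c1 = 0 /\ c2 = 0) -> kernel_cubic <> 0.
Proof.
intros Hb Hu0 Hc.
assert (Ht0 : t <> 0) by (apply kernel_slope_neq0; [lra | exact Hc]).
destruct (kernel_cos_neq0 ltac:(lra) Ht0) as [Hc1 Hc2].
assert (Hsign : 0 < c1 * c2 * ((c1 + c2) * (1 - c1 * c2))).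
{ assert (Hcc : 0 < (c1 * c2) * (c1 * c2))
    by (apply Rlt_0_sqr, Rmult_integral_contrapositive_currified; auto).
  assert (E : b * (c1 * c2 * ((c1 + c2) * (1 - c1 * c2))) = 2 * u * ((c1 * c2) * (c1 * c2)))
    by (transitivity (c1 * c2 * (b * ((c1 + c2) * (1 - c1 * c2)))); [ring|];
        rewrite <- (kernel_compatibility Ht0); ring).
  nra. }
assert (HP : cubic_sign_poly c1 c2 <> 0) by (apply cubic_sign_poly_neq0; nra).
assert (HN : (c1 + c2) * (1 - c1 * c2) <> 0) by (intro HN; rewrite HN in Hsign; lra).
rewrite kernel_cubic_closed_form by lra.
unfold Rdiv. repeat apply Rmult_integral_contrapositive_currified;
  try apply Rinv_neq_0_compat; try apply Rmult_integral_contrapositive_currified;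
  try apply pow_nonzero; auto; lra.
Qed.

Lemma kernel_cubic_K3 : b <> 0 -> c1 = 0 -> c2 = 0 -> kernel_cubic = 0.
Proof.
intros Hb Hc1 Hc2.
assert (Hs1 : s1 ^ 2 = 1) by (rewrite Hc1 in Hsc1; lra).
assert (Hs2 : s2 ^ 2 = 1) by (rewrite Hc2 in Hsc2; lra).
assert (Ht0 : t = 0).
{ apply (Rmult_eq_reg_l (b * s1)); [|apply Rmult_integral_contrapositive_currified; auto].
  rewrite <- Hker1, Hc1. ring. intro Hs. rewrite Hs in Hs1. lra. }
assert (Hsk : s2 * k2 = - (s1 * k1)) by lra.
assert (Hk12 : k2 ^ 2 = k1 ^ 2).
{ transitivity (s2 ^ 2 * k2 ^ 2); [rewrite Hs2; ring|].
  transitivity ((s2 * k2) ^ 2); [ring|]. rewrite Hsk.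
  transitivity (s1 ^ 2 * k1 ^ 2); [ring|]. rewrite Hs1. ring. }
rewrite kernel_cubic_reduced, Ht0.
transitivity (- u ^ 2 * (k1 ^ 2 * (s1 * k1) + k2 ^ 2 * (s2 * k2)) / 2); [field|].
rewrite Hsk, Hk12. field.
Qed.

End KernelCubic.

Definition wbase (xi : R * R) : R := 1 - (cos (fst xi) + cos (snd xi)) / 2.

Definition wpow (p : R) (xi : R * R) : R := exp (p * ln (wbase xi)).

Lemma sin_cos_sq (x : R) : sin x ^ 2 + cos x ^ 2 = 1.
Proof. rewrite <- (sin2_cos2 x). unfold Rsqr. ring. Qed.

Lemma cos_sin_half (x : R) : cos x = 1 - 2 * sin (x / 2) ^ 2.
Proof.
replace x with (2 * (x / 2)) at 1 by field.
rewrite cos_2a_sin. ring.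
Qed.

Lemma wbase_sin_half (xi : R * R) : wbase xi = sin (fst xi / 2) ^ 2 + sin (snd xi / 2) ^ 2.
Proof. unfold wbase. rewrite !cos_sin_half. field. Qed.

Lemma w_wpow (alpha : R) (xi : R * R) : w alpha xi = wpow (alpha / 2) xi.
Proof. unfold w, wpow, Rpower. rewrite wbase_sin_half. reflexivity. Qed.

Definition kron (i j : bool) : R := if Bool.eqb i j then 1 else 0.

(* The first three partial derivatives of [wbase ^ p], by the chain rule from
   [d_i wbase = sin xi_i / 2] and [d_i d_j wbase = kron i j * cos xi_i / 2]. *)
Definition dwpow1 (p : R) (l : bool) (y : R * R) : R :=
  p * wpow p y * sin (coord l y) / (2 * wbase y).

Definition dwpow2 (p : R) (j l : bool) (y : R * R) : R :=
  p * wpow p y * ((p - 1) * sin (coord j y) * sin (coord l y) / (4 * wbase y ^ 2)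
                  + kron j l * cos (coord l y) / (2 * wbase y)).

Definition dwpow3 (p : R) (i j l : bool) (y : R * R) : R :=
  p * wpow p y * ((p - 1) * (p - 2) * sin (coord i y) * sin (coord j y) * sin (coord l y)
                    / (8 * wbase y ^ 3)
                  + (p - 1) * (kron i j * cos (coord i y) * sin (coord l y)
                               + kron i l * cos (coord i y) * sin (coord j y)
                               + kron j l * cos (coord j y) * sin (coord i y)) / (4 * wbase y ^ 2)
                  - kron i j * kron j l * sin (coord i y) / (2 * wbase y)).

Lemma dpart_wpow (p : R) (l : bool) (y : R * R) :
  0 < wbase y -> dpart l (wpow p) y = dwpow1 p l y.
Proof.
destruct y as [y1 y2]; unfold dpart, dwpow1, wpow, wbase; intros Hy.
destruct l; cbn [coord fst snd] in *; apply is_derive_unique; auto_derive;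
  (* so that the [exp (p * ln _)] atoms of both sides coincide syntactically for [field] *)
  unfold Rminus, Rdiv in *; repeat split; try lra; field; lra.
Qed.

Lemma dpart_dwpow1 (p : R) (j l : bool) (y : R * R) :
  0 < wbase y -> dpart j (dwpow1 p l) y = dwpow2 p j l y.
Proof.
destruct y as [y1 y2]; unfold dpart, dwpow1, dwpow2, kron, wpow, wbase; intros Hy.
destruct j, l; cbn [coord fst snd Bool.eqb] in *; apply is_derive_unique; auto_derive;
  unfold Rminus, Rdiv in *; repeat split; try lra; field; lra.
Qed.

Lemma dpart_dwpow2 (p : R) (i j l : bool) (y : R * R) :
  0 < wbase y -> dpart i (dwpow2 p j l) y = dwpow3 p i j l y.
Proof.
destruct y as [y1 y2]; unfold dpart, dwpow2, dwpow3, kron, wpow, wbase; intros Hy.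
destruct i, j, l; cbn [coord fst snd Bool.eqb] in *; apply is_derive_unique; auto_derive;
  unfold Rminus, Rdiv in *; repeat split; try nra; field; nra.
Qed.

Definition slice (i : bool) (x : R * R) (t : R) : R * R :=
  if i then (fst x, t) else (t, snd x).

Lemma dpart_slice (f : R * R -> R) (i : bool) (x : R * R) :
  dpart i f x = Derive (fun t => f (slice i x t)) (coord i x).
Proof. destruct i; reflexivity. Qed.

Lemma wbase_pos_near (i : bool) (x : R * R) :
  0 < wbase x -> locally (coord i x) (fun t => 0 < wbase (slice i x t)).
Proof.
intros Hx.
assert (Hc : continuous (fun t => wbase (slice i x t)) (coord i x)).
{ apply (@ex_derive_continuous R_AbsRing R_NormedModule).
  destruct i; unfold wbase, slice; cbn [fst snd]; auto_derive; exact I. }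
apply Hc, open_gt. destruct i, x; exact Hx.
Qed.

Lemma dpart_ext_wbase (f g : R * R -> R) (i : bool) (x : R * R) :
  (forall y, 0 < wbase y -> f y = g y) -> 0 < wbase x -> dpart i f x = dpart i g x.
Proof.
intros Hfg Hx. rewrite !dpart_slice. apply Derive_ext_loc.
apply (filter_imp _ _ (fun t Ht => Hfg _ Ht) (wbase_pos_near i x Hx)).
Qed.

Lemma dpart_w (alpha : R) (l : bool) (y : R * R) :
  0 < wbase y -> dpart l (w alpha) y = dwpow1 (alpha / 2) l y.
Proof.
intros Hy. rewrite <- dpart_wpow by exact Hy.
apply dpart_ext_wbase; [intros; apply w_wpow | exact Hy].
Qed.

Lemma hess_w (alpha : R) (xi : R * R) (j l : bool) :
  0 < wbase xi -> hess (w alpha) xi j l = dwpow2 (alpha / 2) j l xi.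
Proof.
intros Hxi. unfold hess. rewrite <- dpart_dwpow1 by exact Hxi.
apply dpart_ext_wbase; [apply dpart_w | exact Hxi].
Qed.

Lemma dpart3_w (alpha : R) (xi : R * R) (i j l : bool) :
  0 < wbase xi -> dpart i (dpart j (dpart l (w alpha))) xi = dwpow3 (alpha / 2) i j l xi.
Proof.
intros Hxi. rewrite <- dpart_dwpow2 by exact Hxi.
apply dpart_ext_wbase; [|exact Hxi].
intros y Hy. rewrite <- dpart_dwpow1 by exact Hy.
apply dpart_ext_wbase; [apply dpart_w | exact Hy].
Qed.

Definition wbase_slope (xi k : R * R) : R := (sin (fst xi) * fst k + sin (snd xi) * snd k) / 2.

Lemma w_pos (alpha : R) (xi : R * R) : 0 < w alpha xi.
Proof. apply exp_pos. Qed.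

Lemma hess_w_apply (alpha : R) (xi k : R * R) (i : bool) : 0 < wbase xi ->
  sumb (fun j => hess (w alpha) xi i j * coord j k)
  = alpha / 2 * w alpha xi / wbase xi ^ 2
    * ((wbase xi * cos (coord i xi) * coord i k
        - (1 - alpha / 2) * sin (coord i xi) * wbase_slope xi k) / 2).
Proof.
intros Hxi. unfold sumb. rewrite !hess_w, w_wpow by exact Hxi.
unfold dwpow2, kron, wbase_slope. destruct i; cbn [coord Bool.eqb]; field; lra.
Qed.

Lemma hess_det_w (alpha : R) (xi : R * R) : 0 < wbase xi ->
  hess_det (w alpha) xi
  = (alpha / 2 * w alpha xi / (4 * wbase xi ^ 2)) ^ 2
    * (4 * wbase xi ^ 2 * cos (fst xi) * cos (snd xi)
       - 2 * (1 - alpha / 2) * wbase xi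
         * (cos (fst xi) * sin (snd xi) ^ 2 + cos (snd xi) * sin (fst xi) ^ 2)).
Proof.
intros Hxi. unfold hess_det. rewrite !hess_w, w_wpow by exact Hxi.
unfold dwpow2, kron. cbn [coord Bool.eqb]. field; lra.
Qed.

Lemma dir3_w (alpha : R) (xi k : R * R) : 0 < wbase xi ->
  dir3 (w alpha) xi k
  = alpha / 2 * w alpha xi / wbase xi ^ 3
    * kernel_cubic (1 - alpha / 2) (wbase xi) (wbase_slope xi k)
        (cos (fst xi)) (cos (snd xi)) (sin (fst xi)) (sin (snd xi)) (fst k) (snd k).
Proof.
intros Hxi. unfold dir3, sumb. rewrite !dpart3_w, w_wpow by exact Hxi.
unfold dwpow3, kron, kernel_cubic, wbase_slope. cbn [coord Bool.eqb]. field; lra.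
Qed.

Lemma w_scale_pos (alpha : R) (xi : R * R) (n : nat) :
  0 < alpha -> 0 < wbase xi -> 0 < alpha / 2 * w alpha xi / wbase xi ^ n.
Proof.
intros Ha Hxi. pose proof (w_pos alpha xi).
apply Rdiv_lt_0_compat; [apply Rmult_lt_0_compat; lra | apply pow_lt; exact Hxi].
Qed.

Lemma hess_w_kernel (alpha : R) (xi k : R * R) :
  0 < alpha -> 0 < wbase xi -> in_hess_kernel (w alpha) xi k ->
  forall i, wbase xi * cos (coord i xi) * coord i k
            = (1 - alpha / 2) * sin (coord i xi) * wbase_slope xi k.
Proof.
intros Ha Hxi Hker i. specialize (Hker i).
rewrite hess_w_apply in Hker by exact Hxi.
destruct (Rmult_integral _ _ Hker) as [H0 | H0].
- pose proof (w_scale_pos alpha xi 2 Ha Hxi). lra.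
- lra.
Qed.

Lemma sin_half_neq0 (y : R) : -PI <= y <= PI -> y <> 0 -> sin (y / 2) <> 0.
Proof.
intros Hy Hy0. pose proof PI_RGT_0.
destruct (Rdichotomy _ _ Hy0).
- apply Rlt_not_eq, sin_lt_0_var; lra.
- apply Rgt_not_eq, sin_gt_0; lra.
Qed.

Lemma wbase_pos (xi : R * R) : in_M xi -> 0 < wbase xi.
Proof.
destruct xi as [x1 x2]; intros [H1 [H2 Hx]]; cbn [fst snd] in *.
rewrite wbase_sin_half; cbn [fst snd].
destruct (Req_dec x1 0) as [->|Hx1].
- assert (Hx2 : x2 <> 0) by (intros ->; apply Hx; reflexivity).
  pose proof (Rlt_0_sqr _ (sin_half_neq0 x2 H2 Hx2)).
  unfold Rsqr in *; nra.
- pose proof (Rlt_0_sqr _ (sin_half_neq0 x1 H1 Hx1)).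
  unfold Rsqr in *; nra.
Qed.

Lemma cos_eq0_interval (y : R) : -PI <= y <= PI -> cos y = 0 -> y = PI / 2 \/ y = - (PI / 2).
Proof.
intros Hy Hcos. pose proof PI_RGT_0.
destruct (Rle_or_lt 0 y).
- destruct (cos_eq_0_2PI_0 y) as [|]; lra.
- rewrite <- cos_neg in Hcos. destruct (cos_eq_0_2PI_0 (- y)) as [|]; lra.
Qed.

Lemma cos_eq0_in_K3 (xi : R * R) :
  in_M xi -> cos (fst xi) = 0 -> cos (snd xi) = 0 -> in_K3 xi.
Proof. intros [H1 [H2 _]] Hc1 Hc2. split; apply cos_eq0_interval; assumption. Qed.

Lemma in_K3_in_M (xi : R * R) : in_K3 xi -> in_M xi.
Proof.
destruct xi as [x1 x2]; intros [H1 H2]; unfold in_M; cbn [fst snd] in *.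
pose proof PI_RGT_0.
destruct H1 as [-> | ->], H2 as [-> | ->]; repeat split; try lra;
  intro Hx; injection Hx; lra.
Qed.

Lemma in_K3_cos (xi : R * R) : in_K3 xi -> cos (fst xi) = 0 /\ cos (snd xi) = 0.
Proof.
intros [[-> | ->] [-> | ->]]; rewrite ?cos_neg, cos_PI2; split; reflexivity.
Qed.

Theorem lemma5p4 (alpha : R) (Halpha : 1 < alpha < 2) :
  (forall xi : R * R, in_E alpha xi -> ~ in_K3 xi ->
     forall k : R * R, unit_vec k -> in_hess_kernel (w alpha) xi k ->
       dir3 (w alpha) xi k <> 0) /\
  (forall P : R * R, in_K3 P ->
     in_E alpha P /\
     forall k : R * R, unit_vec k -> in_hess_kernel (w alpha) P k ->
       dir3 (w alpha) P k = 0).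
Proof.
split.
- intros xi [HM _] HK k Hk Hker.
  pose proof (wbase_pos xi HM) as Hxi.
  pose proof (hess_w_kernel alpha xi k ltac:(lra) Hxi Hker) as Hrow.
  rewrite dir3_w by exact Hxi.
  apply Rmult_integral_contrapositive_currified.
  + apply Rgt_not_eq, w_scale_pos; lra.
  + apply (kernel_cubic_neq0 _ _ _ _ _ _ _ _ _ (sin_cos_sq _) (sin_cos_sq _) Hk eq_refl
             (Hrow false) (Hrow true) eq_refl); [lra | exact Hxi |].
    intros [Hc1 Hc2]. exact (HK (cos_eq0_in_K3 xi HM Hc1 Hc2)).
- intros P HP.
  pose proof (in_K3_in_M P HP) as HM.
  pose proof (wbase_pos P HM) as HPpos.
  destruct (in_K3_cos P HP) as [Hc1 Hc2].
  split; [split; [exact HM|] |].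
  + rewrite hess_det_w, Hc1, Hc2 by exact HPpos. ring.
  + intros k Hk Hker.
    pose proof (hess_w_kernel alpha P k ltac:(lra) HPpos Hker) as Hrow.
    rewrite dir3_w by exact HPpos. apply Rmult_eq_0_compat_l.
    exact (kernel_cubic_K3 _ _ _ _ _ _ _ _ _ (sin_cos_sq _) (sin_cos_sq _) eq_refl
             (Hrow false) (Hrow true) ltac:(lra) Hc1 Hc2).
Qed.
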